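(* Let $D\ge1$, $P>0$, $\sigma_1^2,\sigma_2^2>0$, $\alpha_k>0$, $\beta_k>0$ for $k=1,\dots,D$, let $d_k\ge0$ be fixed with at least one $d_k>0$, and let $\varepsilon\in[0,1)$ be fixed. Consider the problem $$\max_{q_1,\dots,q_D\ge0}\;\frac{1-\varepsilon}{2}\sum_{k=1}^D\log_2\frac{\left(1+\frac{\alpha_k}{\sigma_1^2}q_k\right)\left(1+\frac{\beta_k}{\sigma_2^2}d_k\right)}{1+\frac{\alpha_k}{\sigma_1^2}q_k+\frac{\beta_k}{\sigma_2^2}d_k}\quad\text{s.t.}\quad\sum_{k=1}^D q_k\le P.$$ This problem is convex (the objective is concave in $(q_1,\dots,q_D)$), and for $\mu_2>0$ define $$q_k(\mu_2)=\frac{\sigma_1^2}{2\alpha_k}\left[\sqrt{\left(\frac{\beta_k}{\sigma_2^2}d_k\right)^2+\frac{2(1-\varepsilon)\beta_kd_k\alpha_k\mu_2}{\sigma_1^2\sigma_2^2\ln2}}-\frac{\beta_k}{\sigma_2^2}d_k-2\right]^+.$$ Then there exists $\mu_2^*>0$ with $\sum_{k=1}^D q_k(\mu_2^* )=P$, and for any such $\mu_2^*$ the vector $(q_1(\mu_2^* ),\dots,q_D(\mu_2^* ))$ is an optimal solution of the problem.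
   Context: This is the subproblem, with relay variables $d_k$ and time-switching ratio $\varepsilon$ fixed, of the joint source/relay/TS-ratio design for an energy-harvesting MIMO relay: $q_k$ is the power allocated by the source to the $k$-th eigenmode, $P$ the source power budget, $\alpha_k,\beta_k$ the squared singular values of the source–relay and relay–destination channels, and $\sigma_1^2,\sigma_2^2$ the noise variances at relay and destination. $(a)^+=\max\{0,a\}$. *)

From Stdlib Require Import Reals.
Open Scope R_scope.

(* rsum n f = f 0 + f 1 + ... + f (n-1)  (indices k = 1..D of the paper are 0..D-1 here) *)
Fixpoint rsum (n : nat) (f : nat -> R) : R :=
  match n with
  | O => 0
  | S m => rsum m f + f m
  end.

Definition log2 (x : R) : R := ln x / ln 2.

Definition pos_part (a : R) : R := Rmax 0 a.

Definition obj (D : nat) (eps s1 s2 : R) (alpha beta d q : nat -> R) : R :=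
  (1 - eps) / 2 *
  rsum D (fun k =>
    log2 ((1 + alpha k / s1 * q k) * (1 + beta k / s2 * d k)
          / (1 + alpha k / s1 * q k + beta k / s2 * d k))).

Definition feasible (D : nat) (P : R) (q : nat -> R) : Prop :=
  (forall k, (k < D)%nat -> 0 <= q k) /\ rsum D q <= P.

(* closed-form allocation q_k(mu2); s1 = sigma_1^2, s2 = sigma_2^2 *)
Definition q_mu (eps s1 s2 : R) (alpha beta d : nat -> R) (mu2 : R) (k : nat) : R :=
  s1 / (2 * alpha k) *
  pos_part (sqrt ((beta k / s2 * d k) ^ 2
                  + 2 * (1 - eps) * beta k * d k * alpha k * mu2 / (s1 * s2 * ln 2))
            - beta k / s2 * d k - 2).

(* Each mode contributes q |-> log2 ((1 + a q) (1 + b) / (1 + a q + b)), whose derivative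
   a b / ((1 + a q) (1 + a q + b) ln 2) decreases in q on [0, oo); so every mode rate lies below
   its tangents, which gives concavity of the objective. The closed form q_k(mu) is where the
   weighted derivative of the k-th rate equals 1/mu, or 0 when it is already at most 1/mu at 0;
   the tangent inequality then gives rate(q) <= rate(q_k(mu)) + (q - q_k(mu)) / mu for q >= 0,
   and summing with sum q <= P = sum q_k(mu) yields optimality (weak Lagrangian duality).
   The level mu exists by the intermediate value theorem: sum_k q_k(mu) is continuous in mu,
   vanishes for small mu and is unbounded because some d_k > 0. *)

From Stdlib Require Import Reals Lra Psatz Ranalysis5.
From Coquelicot Require Import Coquelicot.
Open Scope R_scope.

Lemma tangent_le_of_deriv_antitone (f f' : R -> R) (lo x y : R) :
  (forall u, lo <= u -> derivable_pt_lim f u (f' u)) ->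
  (forall u v, lo <= u <= v -> f' v <= f' u) ->
  lo <= x -> lo <= y -> f y <= f x + f' x * (y - x).
Proof.
  intros hf hf' hx hy.
  destruct (Rtotal_order x y) as [hxy|[<-|hyx]].
  - destruct (MVT_cor2 f f' x y hxy) as [c [hc hxcy]].
    { intros c hc. apply hf. lra. }
    assert (f' c <= f' x) by (apply hf'; lra).
    assert (f' c * (y - x) <= f' x * (y - x)) by (apply Rmult_le_compat_r; lra).
    lra.
  - lra.
  - destruct (MVT_cor2 f f' y x hyx) as [c [hc hycx]].
    { intros c hc. apply hf. lra. }
    assert (f' x <= f' c) by (apply hf'; lra).
    assert (f' x * (x - y) <= f' c * (x - y)) by (apply Rmult_le_compat_r; lra).
    lra.
Qed.

Lemma concave_of_tangent_le (f f' : R -> R) (lo x y t : R) :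
  (forall u v, lo <= u -> lo <= v -> f v <= f u + f' u * (v - u)) ->
  lo <= x -> lo <= y -> 0 <= t <= 1 ->
  t * f x + (1 - t) * f y <= f (t * x + (1 - t) * y).
Proof.
  intros htan hx hy ht.
  set (z := t * x + (1 - t) * y).
  assert (hz : lo <= z) by (unfold z; nra).
  assert (hzx : t * f x <= t * (f z + f' z * (x - z))) by (apply Rmult_le_compat_l, htan; lra).
  assert (hzy : (1 - t) * f y <= (1 - t) * (f z + f' z * (y - z)))
    by (apply Rmult_le_compat_l, htan; lra).
  assert (t * (f z + f' z * (x - z)) + (1 - t) * (f z + f' z * (y - z)) = f z)
    by (unfold z; ring).
  lra.
Qed.

Definition mode_rate (a b q : R) : R :=
  log2 ((1 + a * q) * (1 + b) / (1 + a * q + b)).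

Definition mode_rate_deriv (a b q : R) : R :=
  a * b / ((1 + a * q) * (1 + a * q + b) * ln 2).

Lemma ln2_pos : 0 < ln 2.
Proof. generalize ln_lt_2; lra. Qed.

Lemma mode_rate_derivable a b q : 0 <= a -> 0 <= b -> 0 <= q ->
  derivable_pt_lim (mode_rate a b) q (mode_rate_deriv a b q).
Proof.
  intros ha hb hq. assert (hL := ln2_pos).
  apply is_derive_Reals. unfold mode_rate, mode_rate_deriv, log2.
  assert (0 <= a * q) by nra.
  auto_derive.
  - split; [nra|]. split; [|exact I].
    apply Rmult_lt_0_compat; [nra|]. apply Rinv_0_lt_compat; nra.
  - field. repeat split; nra.
Qed.

Lemma mode_rate_deriv_antitone a b u v : 0 <= a -> 0 <= b -> 0 <= u <= v ->
  mode_rate_deriv a b v <= mode_rate_deriv a b u.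
Proof.
  intros ha hb huv. assert (hL := ln2_pos). unfold mode_rate_deriv, Rdiv.
  apply Rmult_le_compat_l; [nra|].
  apply Rinv_le_contravar.
  - apply Rmult_lt_0_compat; [|exact hL]. apply Rmult_lt_0_compat; nra.
  - apply Rmult_le_compat_r; [lra|]. apply Rmult_le_compat; nra.
Qed.

Lemma mode_rate_tangent_le a b u v : 0 <= a -> 0 <= b -> 0 <= u -> 0 <= v ->
  mode_rate a b v <= mode_rate a b u + mode_rate_deriv a b u * (v - u).
Proof.
  intros ha hb. apply tangent_le_of_deriv_antitone.
  - intros w hw. apply mode_rate_derivable; assumption.
  - intros w w' hw. apply mode_rate_deriv_antitone; assumption.
Qed.

(* The positive part of the larger root x of [(1 + x) (1 + x + b) = c]. *)
Definition wf_snr (b c : R) : R := pos_part (sqrt (b ^ 2 + 4 * c) - b - 2) / 2.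

Lemma wf_snr_nonneg b c : 0 <= wf_snr b c.
Proof. unfold wf_snr, pos_part. generalize (Rmax_l 0 (sqrt (b ^ 2 + 4 * c) - b - 2)). lra. Qed.

Lemma wf_snr_stationary b c : 0 <= b -> 0 <= c ->
  c <= (1 + wf_snr b c) * (1 + wf_snr b c + b) /\
  (0 < wf_snr b c -> (1 + wf_snr b c) * (1 + wf_snr b c + b) = c).
Proof.
  intros hb hc. unfold wf_snr, pos_part.
  assert (hS2 := sqrt_sqrt (b ^ 2 + 4 * c) ltac:(nra)).
  assert (hS := sqrt_pos (b ^ 2 + 4 * c)).
  set (S := sqrt (b ^ 2 + 4 * c)) in *.
  destruct (Rle_lt_dec (S - b - 2) 0) as [hle|hgt].
  - rewrite Rmax_left by lra. split; [nra|lra].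
  - rewrite Rmax_right by lra. split; nra.
Qed.

Lemma wf_snr_eq0 b c : 0 <= b -> 0 <= c -> c <= 1 + b -> wf_snr b c = 0.
Proof.
  intros hb hc hcb. destruct (wf_snr_stationary b c hb hc) as [_ heq].
  assert (hx := wf_snr_nonneg b c).
  destruct (Rle_lt_or_eq_dec _ _ hx) as [hpos|]; [|auto].
  specialize (heq hpos). nra.
Qed.

Lemma wf_snr_ge b c x : 0 <= b -> 0 <= x -> (b + 2 + 2 * x) ^ 2 <= 4 * c -> x <= wf_snr b c.
Proof.
  intros hb hx hc. unfold wf_snr, pos_part.
  assert (hS2 := sqrt_sqrt (b ^ 2 + 4 * c) ltac:(nra)).
  assert (hS := sqrt_pos (b ^ 2 + 4 * c)).
  set (S := sqrt (b ^ 2 + 4 * c)) in *.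
  assert (hT : b + 2 + 2 * x <= S) by nra.
  rewrite Rmax_right by lra. lra.
Qed.

Lemma pos_part_abs y : pos_part y = (y + Rabs y) / 2.
Proof.
  unfold pos_part, Rmax. destruct (Rle_dec 0 y).
  - rewrite Rabs_right; lra.
  - rewrite Rabs_left; lra.
Qed.

Lemma wf_snr_continuous b c : continuous (wf_snr b) c.
Proof.
  pose (g c := sqrt (b ^ 2 + 4 * c) - b - 2).
  assert (hg : continuous g c).
  { apply (continuous_minus _ (fun _ => 2)); [|apply continuous_const].
    apply (continuous_minus _ (fun _ => b)); [|apply continuous_const].
    apply continuous_sqrt_comp, (continuous_plus (fun _ => b ^ 2)); [apply continuous_const|].
    apply (continuous_mult (fun _ => 4)); [apply continuous_const|apply continuous_id]. }
  apply (continuous_ext (fun c => (g c + Rabs (g c)) * / 2 * / 2)).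
  { intros c'. unfold wf_snr. rewrite pos_part_abs. reflexivity. }
  apply (continuous_mult _ (fun _ => / 2)); [|apply continuous_const].
  apply (continuous_mult _ (fun _ => / 2)); [|apply continuous_const].
  apply (continuous_plus g (fun c => Rabs (g c))); [exact hg|apply continuous_Rabs_comp, hg].
Qed.

Lemma complementary_slackness s m q qs : 0 <= q -> 0 <= qs ->
  s <= m -> (0 < qs -> s = m) -> s * (q - qs) <= m * (q - qs).
Proof.
  intros hq hqs hsm heq. destruct (Rle_lt_or_eq_dec _ _ hqs) as [hpos|<-].
  - rewrite (heq hpos). lra.
  - apply Rmult_le_compat_r; lra.
Qed.

(* With this [c], the stationarity condition [w * mode_rate_deriv a b q = 1 / mu] reads
   [(1 + a q) (1 + a q + b) = c]. *)
Lemma mode_rate_lagrangian_le a b w mu q :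
  0 < a -> 0 <= b -> 0 <= w -> 0 < mu -> 0 <= q ->
  let qs := wf_snr b (w * a * b / ln 2 * mu) / a in
  w * mode_rate a b q <= w * mode_rate a b qs + / mu * (q - qs).
Proof.
  intros ha hb hw hmu hq qs. assert (hL := ln2_pos).
  set (c := w * a * b / ln 2 * mu) in qs.
  assert (hc : 0 <= c)
    by (unfold c; apply Rmult_le_pos; [apply Rdiv_le_0_compat; [repeat apply Rmult_le_pos|]|]; lra).
  set (x := wf_snr b c) in qs.
  assert (hx : 0 <= x) by apply wf_snr_nonneg.
  assert (hqs : 0 <= qs) by (apply Rdiv_le_0_compat; lra).
  assert (hax : a * qs = x) by (unfold qs; field; lra).
  destruct (wf_snr_stationary b c hb hc) as [hcx hxc]. fold x in hcx, hxc.
  assert (hder : w * mode_rate_deriv a b qs = c / (mu * ((1 + x) * (1 + x + b)))).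
  { unfold mode_rate_deriv, c. rewrite hax. field. repeat split; nra. }
  assert (hslack : w * mode_rate_deriv a b qs * (q - qs) <= / mu * (q - qs)).
  { apply complementary_slackness; [lra|lra| |].
    - rewrite hder.
      replace (/ mu) with ((1 + x) * (1 + x + b) / (mu * ((1 + x) * (1 + x + b))))
        by (field; split; nra).
      apply Rmult_le_compat_r; [left; apply Rinv_0_lt_compat, Rmult_lt_0_compat; nra|exact hcx].
    - intros hpos. rewrite hder, hxc by (rewrite <- hax; nra). field. nra. }
  assert (htan := mode_rate_tangent_le a b qs q ltac:(lra) hb hqs hq).
  assert (w * mode_rate a b q <= w * (mode_rate a b qs + mode_rate_deriv a b qs * (q - qs)))
    by (apply Rmult_le_compat_l; lra).
  lra.
Qed.

Lemma rsum_ext n f g : (forall k, (k < n)%nat -> f k = g k) -> rsum n f = rsum n g.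
Proof. induction n as [|n IH]; simpl; intros h; [reflexivity|]. rewrite IH, h; auto. Qed.

Lemma rsum_le n f g : (forall k, (k < n)%nat -> f k <= g k) -> rsum n f <= rsum n g.
Proof.
  induction n as [|n IH]; simpl; intros h; [lra|].
  assert (f n <= g n) by auto. assert (rsum n f <= rsum n g) by auto. lra.
Qed.

Lemma rsum_zero n : rsum n (fun _ => 0) = 0.
Proof. induction n as [|n IH]; simpl; [reflexivity|]. rewrite IH. ring. Qed.

Lemma rsum_nonneg n f : (forall k, (k < n)%nat -> 0 <= f k) -> 0 <= rsum n f.
Proof. intros h. rewrite <- (rsum_zero n). apply rsum_le, h. Qed.

Lemma rsum_plus n f g : rsum n (fun k => f k + g k) = rsum n f + rsum n g.
Proof. induction n as [|n IH]; simpl; [ring|]. rewrite IH. ring. Qed.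

Lemma rsum_minus n f g : rsum n (fun k => f k - g k) = rsum n f - rsum n g.
Proof. induction n as [|n IH]; simpl; [ring|]. rewrite IH. ring. Qed.

Lemma rsum_scal n c f : rsum n (fun k => c * f k) = c * rsum n f.
Proof. induction n as [|n IH]; simpl; [ring|]. rewrite IH. ring. Qed.

Lemma rsum_ge_term n f j : (forall k, (k < n)%nat -> 0 <= f k) -> (j < n)%nat ->
  f j <= rsum n f.
Proof.
  induction n as [|n IH]; simpl; intros h hj; [lia|].
  destruct (Nat.eq_dec j n) as [->|hne].
  - assert (0 <= rsum n f) by (apply rsum_nonneg; auto). lra.
  - assert (f j <= rsum n f) by (apply IH; auto; lia). assert (0 <= f n) by auto. lra.
Qed.

Lemma rsum_continuous n (f : nat -> R -> R) x :
  (forall k, (k < n)%nat -> continuous (f k) x) -> continuous (fun y => rsum n (fun k => f k y)) x.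
Proof.
  induction n as [|n IH]; simpl; intros h; [apply continuous_const|].
  apply (continuous_plus (fun y => rsum n (fun k => f k y)) (f n)); auto.
Qed.

Definition sum_rate (n : nat) (w : R) (a b q : nat -> R) : R :=
  w * rsum n (fun k => mode_rate (a k) (b k) (q k)).

Section Sum_rate.
Variables (n : nat) (w : R) (a b : nat -> R).
Hypothesis hw : 0 <= w.
Hypothesis ha : forall k, (k < n)%nat -> 0 < a k.
Hypothesis hb : forall k, (k < n)%nat -> 0 <= b k.

Lemma sum_rate_concave q1 q2 t :
  (forall k, (k < n)%nat -> 0 <= q1 k) -> (forall k, (k < n)%nat -> 0 <= q2 k) -> 0 <= t <= 1 ->
  t * sum_rate n w a b q1 + (1 - t) * sum_rate n w a b q2
  <= sum_rate n w a b (fun k => t * q1 k + (1 - t) * q2 k).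
Proof.
  intros h1 h2 ht. unfold sum_rate.
  replace (t * (w * _) + (1 - t) * (w * _)) with
    (w * rsum n (fun k => t * mode_rate (a k) (b k) (q1 k) + (1 - t) * mode_rate (a k) (b k) (q2 k)))
    by (rewrite rsum_plus, !rsum_scal; ring).
  apply Rmult_le_compat_l; [exact hw|]. apply rsum_le. intros k hk.
  apply (concave_of_tangent_le _ (mode_rate_deriv (a k) (b k)) 0); auto.
  intros u v hu hv. apply mode_rate_tangent_le; auto. apply Rlt_le; auto.
Qed.

Lemma sum_rate_le_wf mu P q qs : 0 < mu ->
  (forall k, (k < n)%nat -> qs k = wf_snr (b k) (w * a k * b k / ln 2 * mu) / a k) ->
  rsum n qs = P -> (forall k, (k < n)%nat -> 0 <= q k) -> rsum n q <= P ->
  sum_rate n w a b q <= sum_rate n w a b qs.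
Proof.
  intros hmu hqs hsum hq hqP. unfold sum_rate. rewrite <- !rsum_scal.
  apply Rle_trans with
    (rsum n (fun k => w * mode_rate (a k) (b k) (qs k) + / mu * (q k - qs k))).
  - apply rsum_le. intros k hk. rewrite hqs by exact hk.
    exact (mode_rate_lagrangian_le (a k) (b k) w mu (q k) (ha k hk) (hb k hk) hw hmu (hq k hk)).
  - rewrite rsum_plus, (rsum_scal n (/ mu)), rsum_minus, hsum.
    assert (0 < / mu) by (apply Rinv_0_lt_compat; lra).
    nra.
Qed.

End Sum_rate.

Section Water_level.
Variables (n : nat) (a b e : nat -> R).
Hypothesis ha : forall k, (k < n)%nat -> 0 < a k.
Hypothesis hb : forall k, (k < n)%nat -> 0 <= b k.
Hypothesis he : forall k, (k < n)%nat -> 0 <= e k.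

Definition wf_total (mu : R) : R := rsum n (fun k => wf_snr (b k) (e k * mu) / a k).

Lemma wf_total_continuous mu : continuity_pt wf_total mu.
Proof.
  apply continuity_pt_filterlim.
  apply (rsum_continuous n (fun k mu => wf_snr (b k) (e k * mu) / a k)). intros k hk.
  apply (continuous_mult (fun mu => wf_snr (b k) (e k * mu)) (fun _ => / a k));
    [|apply continuous_const].
  apply (continuous_comp (fun mu => e k * mu) (wf_snr (b k))); [|apply wf_snr_continuous].
  apply (continuous_mult (fun _ => e k)); [apply continuous_const|apply continuous_id].
Qed.

Lemma wf_total_vanishes : exists mu, 0 < mu /\ wf_total mu = 0.
Proof.
  set (M := rsum n e). assert (hM : 0 <= M) by (apply rsum_nonneg, he).
  exists (/ (M + 1)). split; [apply Rinv_0_lt_compat; lra|].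
  unfold wf_total. rewrite <- (rsum_zero n). apply rsum_ext. intros k hk.
  assert (hek : e k <= M) by (apply rsum_ge_term; auto).
  assert (hc : e k * / (M + 1) <= 1).
  { apply (Rmult_le_reg_r (M + 1)); [lra|].
    rewrite Rmult_assoc, Rinv_l by lra. lra. }
  rewrite wf_snr_eq0; [unfold Rdiv; ring|auto| |].
  - apply Rmult_le_pos; [auto|left; apply Rinv_0_lt_compat; lra].
  - assert (0 <= b k) by auto. lra.
Qed.

Lemma wf_total_unbounded k0 x mu0 : (k0 < n)%nat -> 0 < e k0 -> 0 <= x ->
  exists mu, mu0 < mu /\ x <= wf_total mu.
Proof.
  intros hk0 he0 hx. assert (ha0 := ha k0 hk0). assert (hb0 := hb k0 hk0).
  set (T := b k0 + 2 + 2 * (a k0 * x)).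
  set (mu := Rabs mu0 + T ^ 2 / (4 * e k0) + 1).
  assert (hT : 0 <= T ^ 2 / (4 * e k0)) by (apply Rdiv_le_0_compat; nra).
  exists mu. split; [generalize (Rle_abs mu0); unfold mu; lra|].
  assert (hsnr : a k0 * x <= wf_snr (b k0) (e k0 * mu)).
  { apply wf_snr_ge; [exact hb0|nra|].
    replace (4 * (e k0 * mu)) with (4 * e k0 * Rabs mu0 + T ^ 2 + 4 * e k0)
      by (unfold mu; field; lra).
    assert (0 <= e k0 * Rabs mu0) by (apply Rmult_le_pos; [lra|apply Rabs_pos]). fold T. lra. }
  apply Rle_trans with (wf_snr (b k0) (e k0 * mu) / a k0).
  - replace x with (a k0 * x / a k0) by (field; lra).
    apply Rmult_le_compat_r; [left; apply Rinv_0_lt_compat|]; lra.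
  - apply (rsum_ge_term n (fun k => wf_snr (b k) (e k * mu) / a k)); [|exact hk0].
    intros k hk. apply Rdiv_le_0_compat; [apply wf_snr_nonneg|auto].
Qed.

Lemma exists_wf_level P : 0 < P -> (exists k, (k < n)%nat /\ 0 < e k) ->
  exists mu, 0 < mu /\ wf_total mu = P.
Proof.
  intros hP [k0 [hk0 he0]].
  destruct wf_total_vanishes as [mu0 [hmu0 h0]].
  destruct (wf_total_unbounded k0 (P + 1) mu0 hk0 he0 ltac:(lra)) as [mu1 [hmu01 h1]].
  destruct (IVT_interv (fun mu => wf_total mu - P) mu0 mu1) as [mu [hmu hmuP]].
  - intros mu hmu. apply continuity_pt_minus;
      [apply wf_total_continuous|apply continuity_pt_const; intros ? ?; reflexivity].
  - exact hmu01.
  - lra.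
  - lra.
  - exists mu. split; lra.
Qed.

End Water_level.

Lemma q_mu_wf_snr eps s1 s2 (alpha beta d : nat -> R) mu k :
  0 < s1 -> 0 < s2 -> 0 < alpha k ->
  q_mu eps s1 s2 alpha beta d mu k =
  wf_snr (beta k / s2 * d k) ((1 - eps) / 2 * (alpha k / s1) * (beta k / s2 * d k) / ln 2 * mu)
  / (alpha k / s1).
Proof.
  intros hs1 hs2 ha. assert (hL := ln2_pos). unfold q_mu, wf_snr.
  replace (2 * (1 - eps) * beta k * d k * alpha k * mu / (s1 * s2 * ln 2)) with
    (4 * ((1 - eps) / 2 * (alpha k / s1) * (beta k / s2 * d k) / ln 2 * mu)) by (field; lra).
  field. lra.
Qed.

Theorem mainTheorem3 (D : nat) (P s1 s2 eps : R) (alpha beta d : nat -> R)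
  (hD : (1 <= D)%nat) (hP : 0 < P) (hs1 : 0 < s1) (hs2 : 0 < s2)
  (halpha : forall k, (k < D)%nat -> 0 < alpha k)
  (hbeta : forall k, (k < D)%nat -> 0 < beta k)
  (hd : forall k, (k < D)%nat -> 0 <= d k)
  (hdpos : exists k, (k < D)%nat /\ 0 < d k)
  (heps : 0 <= eps < 1) :
  (forall (q1 q2 : nat -> R) (t : R),
      (forall k, (k < D)%nat -> 0 <= q1 k) ->
      (forall k, (k < D)%nat -> 0 <= q2 k) ->
      0 <= t <= 1 ->
      t * obj D eps s1 s2 alpha beta d q1 + (1 - t) * obj D eps s1 s2 alpha beta d q2
      <= obj D eps s1 s2 alpha beta d (fun k => t * q1 k + (1 - t) * q2 k))
  /\
  (exists mu2, 0 < mu2 /\ rsum D (q_mu eps s1 s2 alpha beta d mu2) = P)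
  /\
  (forall mu2, 0 < mu2 -> rsum D (q_mu eps s1 s2 alpha beta d mu2) = P ->
     feasible D P (q_mu eps s1 s2 alpha beta d mu2) /\
     forall q, feasible D P q ->
       obj D eps s1 s2 alpha beta d q
       <= obj D eps s1 s2 alpha beta d (q_mu eps s1 s2 alpha beta d mu2)).
Proof.
  set (w := (1 - eps) / 2). set (a k := alpha k / s1). set (b k := beta k / s2 * d k).
  assert (hL := ln2_pos). assert (hw : 0 < w) by (unfold w; lra).
  assert (ha : forall k, (k < D)%nat -> 0 < a k) by (intros; apply Rdiv_lt_0_compat; auto).
  assert (hb : forall k, (k < D)%nat -> 0 <= b k)
    by (intros; apply Rmult_le_pos; [apply Rdiv_le_0_compat|]; auto; apply Rlt_le; auto).
  assert (hq : forall mu k, (k < D)%nat ->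
            q_mu eps s1 s2 alpha beta d mu k = wf_snr (b k) (w * a k * b k / ln 2 * mu) / a k)
    by (intros; apply q_mu_wf_snr; auto).
  change (obj D eps s1 s2 alpha beta d) with (sum_rate D w a b).
  split; [|split].
  - intros q1 q2 t. apply sum_rate_concave; auto. lra.
  - destruct (exists_wf_level D a b (fun k => w * a k * b k / ln 2) ha hb) with P
      as [mu [hmu hmuP]]; auto.
    + intros k hk. apply Rdiv_le_0_compat; [|lra].
      apply Rmult_le_pos; [apply Rmult_le_pos|]; [lra|apply Rlt_le|]; auto.
    + destruct hdpos as [k0 [hk0 hd0]]. exists k0. split; [exact hk0|].
      apply Rdiv_lt_0_compat; [|lra]. unfold b.
      apply Rmult_lt_0_compat; [apply Rmult_lt_0_compat|]; auto.
      apply Rmult_lt_0_compat; [apply Rdiv_lt_0_compat|]; auto.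
    + exists mu. split; [exact hmu|]. rewrite <- hmuP. apply rsum_ext. intros k hk. auto.
  - intros mu hmu hsum. split; [split; [|lra]|].
    + intros k hk. rewrite hq by exact hk.
      apply Rdiv_le_0_compat; [apply wf_snr_nonneg|auto].
    + intros q [hq0 hqP]. apply (sum_rate_le_wf D w a b) with mu P; auto. lra.
Qed.
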